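(* Let $\mathcal R$ be a strong CCTRS. If $s\in\mathcal T_{\mathrm p}(\mathcal H)$ is a proper ground term, then every $(\Xi(\mathcal R),\mu)$-normal form $t$ of $s$ (i.e., $s\to^*_{\Xi(\mathcal R),\mu}t$ and $t$ is irreducible with respect to $\to_{\Xi(\mathcal R),\mu}$) is a $\bot$-pattern.
   Context: A CCTRS over $\mathcal F$ is a set $\mathcal R$ of conditional rules each of the form $f(\ell_1,\dots,\ell_n)\to r\Leftarrow a_1\approx b_1,\dots,a_k\approx b_k$ (defined symbols are roots of left-hand sides, others constructors; constructor terms contain only constructors and variables) where $\ell_1,\dots,\ell_n,b_1,\dots,b_k$ are constructor terms, the terms $f(\ell_1,\dots,\ell_n),b_1,\dots,b_k$ pairwise share no variables, $\mathrm{Var}(r)\subseteq\mathrm{Var}(\ell_1,\dots,\ell_n,b_1,\dots,b_k)$, and $\mathrm{Var}(a_i)\subseteq\mathrm{Var}(\ell_1,\dots,\ell_n,b_1,\dots,b_{i-1})$. $\mathcal R{\restriction}f$ is the set of rules with left-hand root $f$. A strong CCTRS is a CCTRS with each $\mathcal R{\restriction}f$ finite and each $f(\ell_1,\dots,\ell_n)$ and $b_j$ linear. Let $m_f=|\mathcal R{\restriction}f|$ (0 for constructors), with fixed enumeration $\rho^f_1,\dots,\rho^f_{m_f}$. The transformed system: signature $\mathcal H$ with constants $\bot,\top$ ($\mu=\emptyset$); every $f\in\mathcal F$ of arity $n$ as a symbol of arity $n+m_f$ with $\mu(f)=\{1,\dots,n\}$; and for every defined $f$ of arity $n$, every $\rho^f_i$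 with $k>0$ conditions and $1\le j\le k$ a symbol $f_i^j$ of arity $n+m_f+j-1$ with $\mu(f_i^j)=\{n+i+j-1\}$. A position is active in $t$ if it is $\epsilon$ or $iq$ with $i\in\mu(\mathrm{root}(t))$ and $q$ active in $t|_i$; $\to_{\Xi(\mathcal R),\mu}$ rewrites only at active positions. $\xi_\star$ ($\star\in\{\bot,\top\}$): identity on variables, homomorphic on constructors, $f(t_1..t_n)\mapsto f(\xi_\star(t_1),\dots,\xi_\star(t_n),\star,\dots,\star)$ ($m_f$ copies) for defined $f$; a $\bot$-pattern is a linear term $\xi_\bot(t)$ with $t\in\mathcal T(\mathcal F,\mathcal V)$. For a linear constructor term $t$: $\mathrm{AP}(x)=\emptyset$, and $\mathrm{AP}(f(t_1,\dots,t_n))$ consists of $g(x_1,\dots,x_m)$ for every constructor $g\neq f$ of arity $m$, $g(x_1,\dots,x_m,\bot,\dots,\bot)$ for every defined $g$ of arity $m$, and $f(x_1,\dots,x_{i-1},u,x_{i+1},\dots,x_n)$ for $u\in\mathrm{AP}(t_i)$ (fresh distinct $x$'s). Notation: $\langle t_1,\dots,t_n\rangle[u_1,\dots,u_j]_i$ is $t_1,\dots,t_{i-1},u_1,\dots,u_j,t_{i+1},\dots,t_n$. For the $i$-th rule $\rho_i\colon f(\vec\ell)\to r\Leftarrow a_1\approx b_1,\dots,a_k\approx b_k$ of $\mathcal R{\restriction}f$ and fresh distinct $x_1,\dots,x_{m_f},y_1,\dots,y_n$, $\Xi(\mathcal R)$ contains: $(1)$ if $k=0$: $f(\vec\ell,\langle\vec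 x\rangle[\top]_i)\to\xi_\top(r)$; if $k>0$: $(2)$ $f(\vec\ell,\langle\vec x\rangle[\top]_i)\to f_i^1(\vec\ell,\langle\vec x\rangle[\xi_\top(a_1)]_i)$, $(3)$ $f_i^k(\vec\ell,\langle\vec x\rangle[b_1,\dots,b_k]_i)\to\xi_\top(r)$, $(4)$ for $1\le j<k$: $f_i^j(\vec\ell,\langle\vec x\rangle[b_1,\dots,b_j]_i)\to f_i^{j+1}(\vec\ell,\langle\vec x\rangle[b_1,\dots,b_j,\xi_\top(a_{j+1})]_i)$, $(5)$ for $1\le j\le k$ and $v\in\mathrm{AP}(b_j)$ (fresh variables): $f_i^j(\vec\ell,\langle\vec x\rangle[b_1,\dots,b_{j-1},v]_i)\to f(\vec\ell,\langle\vec x\rangle[\bot]_i)$; and for any $k$: $(6)$ for $1\le j\le n$ and $v\in\mathrm{AP}(\ell_j)$ (fresh variables): $f(\langle\vec y\rangle[v]_j,\langle\vec x\rangle[\top]_i)\to f(\langle\vec y\rangle[v]_j,\langle\vec x\rangle[\bot]_i)$. Proper terms $\mathcal T_{\mathrm p}(\mathcal H,\mathcal V)$: a term of $\mathcal T(\mathcal H,\mathcal V)$ is proper if it is a variable, or $f(s_1,\dots,s_n)$ with $f$ a constructor and proper $s_i$, or $f(s_1,\dots,s_n,c_1,\dots,c_{m_f})$ with $f$ defined, proper $s_i$ and $c_1,\dots,c_{m_f}\in\{\bot,\top\}$; $\mathcal T_{\mathrm p}(\mathcal H)$ denotes the ground proper terms. *)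

From Stdlib Require Import List Arith.
Import ListNotations.
Set Implicit Arguments.

Inductive term (S : Type) : Type :=
| V : nat -> term S
| Fn : S -> list (term S) -> term S.
Arguments V {S} _.

Fixpoint vars {S : Type} (t : term S) : list nat :=
  match t with
  | V x => [x]
  | Fn _ ts => flat_map vars ts
  end.

Definition linear {S : Type} (t : term S) : Prop := NoDup (vars t).
Definition ground {S : Type} (t : term S) : Prop := vars t = [].

Fixpoint subst {S : Type} (sigma : nat -> term S) (t : term S) : term S :=
  match t with
  | V x => sigma x
  | Fn f ts => Fn f (map (subst sigma) ts)
  end.

Definition disjoint (l1 l2 : list nat) : Prop :=
  forall x, In x l1 -> ~ In x l2.

(* A conditional rule  f(cl) -> cr <= a_1 ~ b_1, ..., a_k ~ b_k ;
   the root symbol f is given by the index under which the rule is stored. *)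
Record crule (FS : Type) := CRule {
  cl : list (term FS);
  cr : term FS;
  cc : list (term FS * term FS)
}.

Definition rule_vars {FS : Type} (rho : crule FS) : list nat :=
  flat_map vars (cl rho) ++ vars (cr rho)
  ++ flat_map (fun p => vars (fst p) ++ vars (snd p)) (cc rho).

Inductive hsym (FS : Type) : Type :=
| HF : FS -> hsym FS                     (* f in F, arity n + m_f *)
| HCond : FS -> nat -> nat -> hsym FS    (* f_i^j  (i, j are 1-based) *)
| HBot : hsym FS
| HTop : hsym FS.
Arguments HBot {FS}.
Arguments HTop {FS}.

Definition tBot {FS : Type} : term (hsym FS) := Fn HBot [].
Definition tTop {FS : Type} : term (hsym FS) := Fn HTop [].

(* <l>[us]_i  (i is 1-based): replace the i-th element of l by the list us *)
Definition splice {A : Type} (l : list A) (i : nat) (us : list A) : list A :=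
  firstn (i - 1) l ++ us ++ skipn i l.

Section CCTRS.
Context {FS : Type} (ar : FS -> nat).
(* R f is the fixed enumeration rho^f_1, ..., rho^f_{m_f} of R|f *)
Context (R : FS -> list (crule FS)).

Definition mf (f : FS) : nat := length (R f).
Definition defined (f : FS) : Prop := R f <> [].
Definition is_constructor (f : FS) : Prop := R f = [].

Inductive wf : term FS -> Prop :=
| wf_V x : wf (V x)
| wf_Fn g ts : length ts = ar g -> Forall wf ts -> wf (Fn g ts).

Inductive ctor_term : term FS -> Prop :=
| ct_V x : ctor_term (V x)
| ct_Fn g ts : is_constructor g -> Forall ctor_term ts -> ctor_term (Fn g ts).

Definition cctrs_rule (f : FS) (rho : crule FS) : Prop :=
  length (cl rho) = ar f /\ Forall wf (cl rho) /\ wf (cr rho)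
  /\ Forall (fun p => wf (fst p) /\ wf (snd p)) (cc rho)
  /\ Forall ctor_term (cl rho)
  /\ Forall (fun p => ctor_term (snd p)) (cc rho)
  /\ (forall j a b, nth_error (cc rho) j = Some (a, b) ->
        disjoint (flat_map vars (cl rho)) (vars b))
  /\ (forall j j' a b a' b', j <> j' ->
        nth_error (cc rho) j = Some (a, b) ->
        nth_error (cc rho) j' = Some (a', b') -> disjoint (vars b) (vars b'))
  /\ incl (vars (cr rho))
          (flat_map vars (cl rho) ++ flat_map (fun p => vars (snd p)) (cc rho))
  (* Var(a_i) included in Var(l, b_1..b_{i-1})  (j = i-1, 0-based) *)
  /\ (forall j a b, nth_error (cc rho) j = Some (a, b) ->
        incl (vars a) (flat_map vars (cl rho)
                       ++ flat_map (fun p => vars (snd p)) (firstn j (cc rho)))).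

(* A strong CCTRS: each R|f finite (given as the list R f, without
   repetitions), every rule satisfies the CCTRS conditions, f(l) and each
   b_j are linear. *)
Definition strong_CCTRS : Prop :=
  forall f, NoDup (R f) /\
    forall rho, In rho (R f) ->
      cctrs_rule f rho
      /\ NoDup (flat_map vars (cl rho))
      /\ Forall (fun p => linear (snd p)) (cc rho).

Fixpoint xi (c : term (hsym FS)) (t : term FS) : term (hsym FS) :=
  match t with
  | V x => V x
  | Fn f ts => Fn (HF f) (map (xi c) ts ++ repeat c (mf f))
  end.

(* a constructor term seen as an H-term (homomorphic embedding) *)
Fixpoint cemb (t : term FS) : term (hsym FS) :=
  match t with
  | V x => V x
  | Fn f ts => Fn (HF f) (map cemb ts)
  end.

(* u in AP(t), with fresh distinct variables (t a linear constructor term) *)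
Inductive AP : term FS -> term (hsym FS) -> Prop :=
| AP_ctor f ts g xs :
    is_constructor g -> g <> f -> length xs = ar g -> NoDup xs ->
    AP (Fn f ts) (Fn (HF g) (map V xs))
| AP_def f ts g xs :
    defined g -> length xs = ar g -> NoDup xs ->
    AP (Fn f ts) (Fn (HF g) (map V xs ++ repeat tBot (mf g)))
| AP_arg f ts1 t ts2 u xs1 xs2 :
    AP t u -> length xs1 = length ts1 -> length xs2 = length ts2 ->
    NoDup (xs1 ++ xs2 ++ vars u) ->
    AP (Fn f (ts1 ++ t :: ts2)) (Fn (HF f) (map V xs1 ++ u :: map V xs2)).

Definition setup (f : FS) (i : nat) (rho : crule FS) (xs : list nat) : Prop :=
  1 <= i /\ nth_error (R f) (i - 1) = Some rho /\
  length xs = mf f /\ NoDup xs /\ disjoint xs (rule_vars rho).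

Definition Bs (rho : crule FS) (j : nat) : list (term (hsym FS)) :=
  map (fun p => cemb (snd p)) (firstn j (cc rho)).

Definition Ls (rho : crule FS) : list (term (hsym FS)) := map cemb (cl rho).

Definition Xs (xs : list nat) : list (term (hsym FS)) := map V xs.

Inductive Xi : term (hsym FS) -> term (hsym FS) -> Prop :=
| Xi1 f i rho xs :
    setup f i rho xs -> cc rho = [] ->
    Xi (Fn (HF f) (Ls rho ++ splice (Xs xs) i [tTop])) (xi tTop (cr rho))
| Xi2 f i rho xs a1 b1 :
    setup f i rho xs -> nth_error (cc rho) 0 = Some (a1, b1) ->
    Xi (Fn (HF f) (Ls rho ++ splice (Xs xs) i [tTop]))
       (Fn (HCond f i 1) (Ls rho ++ splice (Xs xs) i [xi tTop a1]))
| Xi3 f i rho xs :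
    setup f i rho xs -> 0 < length (cc rho) ->
    Xi (Fn (HCond f i (length (cc rho)))
           (Ls rho ++ splice (Xs xs) i (Bs rho (length (cc rho)))))
       (xi tTop (cr rho))
| Xi4 f i rho xs j a b :
    setup f i rho xs -> 1 <= j -> j < length (cc rho) ->
    nth_error (cc rho) j = Some (a, b) ->    (* (a,b) = (a_{j+1}, b_{j+1}) *)
    Xi (Fn (HCond f i j) (Ls rho ++ splice (Xs xs) i (Bs rho j)))
       (Fn (HCond f i (S j))
           (Ls rho ++ splice (Xs xs) i (Bs rho j ++ [xi tTop a])))
| Xi5 f i rho xs j a b v :
    setup f i rho xs -> 1 <= j -> j <= length (cc rho) ->
    nth_error (cc rho) (j - 1) = Some (a, b) ->   (* (a,b) = (a_j, b_j) *)
    AP b v -> disjoint (vars v) (xs ++ rule_vars rho) ->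
    Xi (Fn (HCond f i j) (Ls rho ++ splice (Xs xs) i (Bs rho (j - 1) ++ [v])))
       (Fn (HF f) (Ls rho ++ splice (Xs xs) i [tBot]))
| Xi6 f i rho xs ys j lj v :
    setup f i rho xs -> length ys = ar f -> NoDup (xs ++ ys) ->
    disjoint ys (rule_vars rho) ->
    1 <= j -> j <= ar f -> nth_error (cl rho) (j - 1) = Some lj ->
    AP lj v -> disjoint (vars v) (xs ++ ys ++ rule_vars rho) ->
    Xi (Fn (HF f) (splice (Xs ys) j [v] ++ splice (Xs xs) i [tTop]))
       (Fn (HF f) (splice (Xs ys) j [v] ++ splice (Xs xs) i [tBot])).

(* replacement map mu, with 0-based argument indices *)
Definition active (g : hsym FS) (k : nat) : Prop :=
  match g with
  | HF f => k < ar f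
  | HCond f i j => k + 2 = ar f + i + j      (* mu(f_i^j) = {n+i+j-1} *)
  | HBot | HTop => False
  end.

Inductive cstep : term (hsym FS) -> term (hsym FS) -> Prop :=
| cstep_root l r sigma : Xi l r -> cstep (subst sigma l) (subst sigma r)
| cstep_ctx g ts1 t t' ts2 :
    active g (length ts1) -> cstep t t' ->
    cstep (Fn g (ts1 ++ t :: ts2)) (Fn g (ts1 ++ t' :: ts2)).

Inductive csteps : term (hsym FS) -> term (hsym FS) -> Prop :=
| csteps_refl t : csteps t t
| csteps_step t u w : cstep t u -> csteps u w -> csteps t w.

Definition normal_form_of (s t : term (hsym FS)) : Prop :=
  csteps s t /\ ~ (exists u, cstep t u).

Inductive proper : term (hsym FS) -> Prop :=
| pr_V x : proper (V x)
| pr_F f ss cs :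
    length ss = ar f -> Forall proper ss ->
    length cs = mf f -> Forall (fun c => c = tBot \/ c = tTop) cs ->
    proper (Fn (HF f) (ss ++ cs)).

Definition bot_pattern (t : term (hsym FS)) : Prop :=
  linear t /\ exists u, wf u /\ t = xi tBot u.

End CCTRS.

(* Every term reachable from a proper ground term is [good], a shape that
   every rewrite step preserves. A good normal form has neither a [tTop] flag
   nor an [f_i^j]-node: a [tTop] flag for [rho_i] above normal (hence
   [xi_bot]) arguments triggers rule (1)/(2) when the arguments match
   [l_1..l_n] and rule (6) otherwise, and an [f_i^j]-node with a normal active
   argument triggers (3)/(4) or (5). Both case splits are exhaustive because a
   ground [xi_bot u] that is not an instance of a linear constructor term [b]
   is an instance of some anti-pattern in [AP(b)]. So the normal form is
   [xi_bot u] with [u] ground, hence linear. *)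

From Stdlib Require Import List Arith Lia Classical Permutation.
Import ListNotations.

Lemma app_inj_length {A} (a b c d : list A) :
  length a = length c -> a ++ b = c ++ d -> a = c /\ b = d.
Proof.
  revert c; induction a as [|x a IH]; intros [|y c] Hl He; simpl in *; try lia; auto.
  injection He as -> He. destruct (IH c ltac:(lia) He) as [-> ->]. auto.
Qed.

Lemma app_cons_inj_length {A} (a c d : list A) x b :
  length a < length c -> a ++ x :: b = c ++ d ->
  exists c2, c = a ++ x :: c2 /\ b = c2 ++ d.
Proof.
  revert c; induction a as [|z a IH]; intros [|y c] Hl He; simpl in *; try lia.
  - injection He as -> ->. eauto.
  - injection He as -> He. destruct (IH c ltac:(lia) He) as [c2 [-> ->]]. eauto.
Qed.

Lemma firstn_S_nth_error {A} (l : list A) j x :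
  nth_error l j = Some x -> firstn (S j) l = firstn j l ++ [x].
Proof.
  revert j; induction l; intros [|j] H; simpl in *; try discriminate.
  - now injection H as ->.
  - now rewrite (IHl j H).
Qed.

Lemma in_firstn {A} n (l : list A) x : In x (firstn n l) -> In x l.
Proof. intros H. rewrite <- (firstn_skipn n l). apply in_app_iff; auto. Qed.

Lemma NoDup_app_disjoint {A} (l1 l2 : list A) x : NoDup (l1 ++ l2) -> In x l1 -> ~ In x l2.
Proof.
  induction l1 as [|y l1 IH]; simpl; intros Hn H1 H2; [contradiction|].
  inversion Hn as [|? ? Hy Hn']; subst.
  destruct H1 as [<-|H1]; [apply Hy, in_app_iff; auto|exact (IH Hn' H1 H2)].
Qed.

Lemma NoDup_flat_map_In {A B} (f : A -> list B) ls l :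
  NoDup (flat_map f ls) -> In l ls -> NoDup (f l).
Proof.
  intros Hn Hl. apply In_split in Hl as (ls1 & ls2 & ->).
  rewrite flat_map_app in Hn. simpl in Hn.
  exact (NoDup_app_remove_r _ _ (NoDup_app_remove_l _ _ Hn)).
Qed.

Lemma flat_map_eq_nil {A B} (f : A -> list B) l :
  flat_map f l = [] <-> forall x, In x l -> f x = [].
Proof.
  induction l as [|y l IH]; simpl; [split; auto; contradiction|].
  split.
  - intros H x [<-|Hx]; apply app_eq_nil in H as [H1 H2]; [exact H1|now apply IH].
  - intros H. rewrite (H y (or_introl eq_refl)). apply IH. auto.
Qed.

Lemma flat_map_map {A B C} (f : B -> list C) (g : A -> B) l :
  flat_map f (map g l) = flat_map (fun x => f (g x)) l.
Proof. induction l; simpl; f_equal; auto. Qed.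

Lemma list_exists_preimage {A B} (h : A -> B) (Q : A -> Prop) (ss : list B) :
  (forall s, In s ss -> exists u, Q u /\ s = h u) ->
  exists us, ss = map h us /\ forall u, In u us -> Q u.
Proof.
  induction ss as [|s ss IH]; intros H.
  - exists []. split; auto. intros u [].
  - destruct (H s (or_introl eq_refl)) as [u [Qu ->]].
    destruct IH as [us [-> Hus]]; [intros; apply H; simpl; auto|].
    exists (u :: us). split; auto. intros u' [<-|Hu]; auto.
Qed.

Lemma fresh_vars (n : nat) (L : list nat) :
  exists xs, length xs = n /\ NoDup xs /\ disjoint xs L.
Proof.
  exists (seq (S (list_max L)) n). split; [apply length_seq|]. split; [apply seq_NoDup|].
  intros x Hx HL. apply in_seq in Hx.
  assert (H : list_max L <= list_max L) by lia. apply list_max_le in H.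
  rewrite Forall_forall in H. specialize (H x HL). lia.
Qed.

Lemma map_splice {A B} (f : A -> B) l i us :
  map f (splice l i us) = splice (map f l) i (map f us).
Proof. unfold splice. now rewrite !map_app, firstn_map, skipn_map. Qed.

Lemma length_splice1 {A} (l : list A) i (c : A) :
  1 <= i -> i <= length l -> length (splice l i [c]) = length l.
Proof.
  intros. unfold splice. rewrite !length_app, length_firstn, length_skipn. simpl. lia.
Qed.

Lemma splice_middle {A} (a b : list A) x us :
  splice (a ++ x :: b) (length a + 1) us = a ++ us ++ b.
Proof.
  unfold splice. replace (length a + 1 - 1) with (length a) by lia.
  rewrite firstn_app, firstn_all, Nat.sub_diag, skipn_app, skipn_all2 by lia.
  simpl. rewrite app_nil_r. now replace (length a + 1 - length a) with 1 by lia.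
Qed.

Lemma Forall_splice {A} (P : A -> Prop) l i us :
  Forall P (splice l i us) <->
  Forall P (firstn (i - 1) l) /\ Forall P us /\ Forall P (skipn i l).
Proof. unfold splice. rewrite !Forall_app. tauto. Qed.

Fixpoint term_nested_ind {S} (P : term S -> Prop) (HV : forall x, P (V x))
  (HF : forall f ts, Forall P ts -> P (Fn f ts)) (t : term S) : P t :=
  match t with
  | V x => HV x
  | Fn f ts => HF f ts ((fix go l := match l return Forall P l with
                   | [] => Forall_nil _
                   | t :: l => Forall_cons _ (term_nested_ind P HV HF t) (go l) end) ts)
  end.

Lemma subst_ext_in {S} (s1 s2 : nat -> term S) t :
  (forall x, In x (vars t) -> s1 x = s2 x) -> subst s1 t = subst s2 t.
Proof.
  induction t as [x|f ts IH] using term_nested_ind; simpl; intros H.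
  - apply H; auto.
  - f_equal. induction IH as [|t ts Ht _ IHts]; simpl in *; auto.
    f_equal; [apply Ht|apply IHts]; intros; apply H, in_app_iff; auto.
Qed.

Lemma map_subst_ext_in {S} (s1 s2 : nat -> term S) ts :
  (forall x, In x (flat_map vars ts) -> s1 x = s2 x) ->
  map (subst s1) ts = map (subst s2) ts.
Proof.
  intros H. apply map_ext_in. intros t Ht. apply subst_ext_in.
  intros x Hx. apply H, in_flat_map. eauto.
Qed.

Lemma subst_ground {S} (s : nat -> term S) t : vars t = [] -> subst s t = t.
Proof.
  intros Ht. rewrite (subst_ext_in s V) by (rewrite Ht; contradiction).
  clear. induction t as [x|f ts IH] using term_nested_ind; simpl; auto.
  f_equal. induction IH; simpl; f_equal; auto.
Qed.

Lemma flat_map_vars_map_V {S} xs : flat_map vars (map (@V S) xs) = xs.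
Proof. induction xs; simpl; f_equal; auto. Qed.

Lemma map_subst_map_V {S} (s : nat -> term S) xs : map (subst s) (map V xs) = map s xs.
Proof. now rewrite map_map. Qed.

Lemma flat_map_vars_repeat {S} (c : term S) n :
  vars c = [] -> flat_map vars (repeat c n) = [].
Proof. intros Hc. induction n; simpl; auto. now rewrite Hc. Qed.

Lemma vars_cemb {S} (t : term S) : vars (cemb t) = vars t.
Proof.
  induction t using term_nested_ind; simpl; auto.
  induction H; simpl; auto. now rewrite H, IHForall.
Qed.

Lemma flat_map_vars_cemb {S} (ts : list (term S)) :
  flat_map vars (map cemb ts) = flat_map vars ts.
Proof. induction ts; simpl; auto. now rewrite vars_cemb, IHts. Qed.

Fixpoint subst_update {S} (xs : list nat) (vs : list (term S)) (s0 : nat -> term S) : nat -> term S :=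
  match xs, vs with
  | x :: xs', v :: vs' => fun y => if Nat.eqb y x then v else subst_update xs' vs' s0 y
  | _, _ => s0
  end.

Lemma subst_update_notin {S} xs vs (s0 : nat -> term S) y : ~ In y xs -> subst_update xs vs s0 y = s0 y.
Proof.
  revert vs; induction xs; intros [|v vs] H; simpl in *; auto.
  destruct (Nat.eqb_spec y a); [exfalso; auto|]. apply IHxs; tauto.
Qed.

Lemma map_subst_update {S} xs vs (s0 : nat -> term S) :
  NoDup xs -> length xs = length vs -> map (subst_update xs vs s0) xs = vs.
Proof.
  revert vs; induction xs; intros [|v vs] Hn Hl; simpl in *; try lia; auto.
  inversion Hn; subst. rewrite Nat.eqb_refl. f_equal.
  transitivity (map (subst_update xs vs s0) xs); [|apply IHxs; auto].
  apply map_ext_in. intros y Hy.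
  destruct (Nat.eqb_spec y a); [subst; contradiction|reflexivity].
Qed.

Definition subst_union {S} (l : list nat) (s1 s2 : nat -> term S) : nat -> term S :=
  fun x => if in_dec Nat.eq_dec x l then s1 x else s2 x.

Lemma subst_union_in {S} l (s1 s2 : nat -> term S) x : In x l -> subst_union l s1 s2 x = s1 x.
Proof. unfold subst_union. now destruct (in_dec Nat.eq_dec x l). Qed.

Lemma subst_union_notin {S} l (s1 s2 : nat -> term S) x :
  ~ In x l -> subst_union l s1 s2 x = s2 x.
Proof. unfold subst_union. now destruct (in_dec Nat.eq_dec x l). Qed.

Section Transformation.
Context {FS : Type} (ar : FS -> nat) (R : FS -> list (crule FS)).
Notation T := (term (hsym FS)).
Implicit Types (rho : crule FS) (sg : nat -> T).

Definition flag (c : T) : Prop := c = tBot \/ c = tTop.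

Lemma flags_all_bot_or_top (cs : list T) : Forall flag cs ->
  cs = repeat tBot (length cs) \/ exists cs1 cs2, cs = cs1 ++ tTop :: cs2.
Proof.
  induction 1 as [|c cs Hc Hf IH]; simpl; auto.
  destruct Hc as [->| ->].
  - destruct IH as [E|[a [b E]]]; [left; f_equal; auto|right; exists (tBot :: a), b; now rewrite E].
  - right. now exists [], cs.
Qed.

(* The shape of the terms reachable from proper ground terms: an [f]-node
   carries flags in its last [mf f] arguments, and an [f_i^j]-node is a ground
   instance of [f_i^j(l_1..l_n, c_1..c_(i-1), b_1..b_(j-1), w, c_(i+1)..)] of
   [rho_i] with flags [c] and an arbitrary good term [w] at its active
   position. *)
Inductive good : T -> Prop :=
| good_F f ss cs : length ss = ar f -> (forall s, In s ss -> good s) ->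
    length cs = mf R f -> Forall flag cs -> good (Fn (HF f) (ss ++ cs))
| good_Cond f i j rho sg cs1 cs2 w :
    1 <= i -> nth_error (R f) (i - 1) = Some rho -> 1 <= j -> j <= length (cc rho) ->
    length cs1 = i - 1 -> length cs1 + S (length cs2) = mf R f ->
    Forall flag cs1 -> Forall flag cs2 ->
    (forall s, In s (map (subst sg) (Ls rho)) -> good s) ->
    (forall b, In b (map (subst sg) (Bs rho (j - 1))) -> good b) -> good w ->
    good (Fn (HCond f i j)
            (map (subst sg) (Ls rho) ++ cs1 ++ map (subst sg) (Bs rho (j - 1)) ++ w :: cs2)).

Lemma good_F_inv f args : good (Fn (HF f) args) -> exists ss cs, args = ss ++ cs /\
  length ss = ar f /\ (forall s, In s ss -> good s) /\ length cs = mf R f /\ Forall flag cs.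
Proof. intros H; inversion H; subst; eauto 10. Qed.

Lemma good_Cond_inv f i j args : good (Fn (HCond f i j) args) -> exists rho sg cs1 cs2 w,
    1 <= i /\ nth_error (R f) (i - 1) = Some rho /\ 1 <= j /\ j <= length (cc rho) /\
    length cs1 = i - 1 /\ length cs1 + S (length cs2) = mf R f /\
    Forall flag cs1 /\ Forall flag cs2 /\
    (forall s, In s (map (subst sg) (Ls rho)) -> good s) /\
    (forall b, In b (map (subst sg) (Bs rho (j - 1))) -> good b) /\ good w /\
    args = map (subst sg) (Ls rho) ++ cs1 ++ map (subst sg) (Bs rho (j - 1)) ++ w :: cs2.
Proof. intros H; inversion H; subst; eauto 20. Qed.

Lemma proper_ground_good (s : T) : proper ar R s -> ground s -> good s.
Proof.
  induction s as [x|g args IH] using term_nested_ind; intros Hp Hg.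
  - discriminate.
  - inversion Hp; subst. unfold ground in Hg; simpl in Hg.
    pose proof (proj1 (flat_map_eq_nil _ _) Hg) as Hg'.
    apply good_F; auto. intros s Hs. rewrite Forall_forall in IH, H2.
    apply IH; [apply in_app_iff; auto|auto|apply Hg', in_app_iff; auto].
Qed.

Lemma vars_xi c u : vars c = [] -> vars (xi R c u) = vars u.
Proof.
  intros Hc. induction u as [x|g ts IH] using term_nested_ind; simpl; auto.
  rewrite flat_map_app, flat_map_vars_repeat, app_nil_r by auto.
  induction IH; simpl; auto. now rewrite H, IHIH.
Qed.

Lemma xi_ctor c g us : is_constructor R g -> xi R c (Fn g us) = Fn (HF g) (map (xi R c) us).
Proof. intros H. simpl. unfold mf. rewrite H. simpl. now rewrite app_nil_r. Qed.

Lemma good_subst_xi_top sg a : wf ar a -> (forall x, In x (vars a) -> good (sg x)) ->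
  good (subst sg (xi R tTop a)).
Proof.
  induction a as [x|g ts IH] using term_nested_ind; intros Hw Hv; simpl.
  - apply Hv; simpl; auto.
  - inversion Hw as [|? ? Hlen Hwts]; subst.
    rewrite map_app, map_repeat, subst_ground by reflexivity. apply good_F.
    + now rewrite !length_map.
    + intros s Hs. rewrite map_map in Hs. apply in_map_iff in Hs as [t [<- Ht]].
      rewrite Forall_forall in IH, Hwts. apply IH; auto.
      intros x Hx; apply Hv; simpl; apply in_flat_map; eauto.
    + apply repeat_length.
    + apply Forall_forall. intros c Hc. apply repeat_spec in Hc. now right.
Qed.

Lemma good_ctor_vars sg b : ctor_term R b -> good (subst sg (cemb b)) ->
  forall x, In x (vars b) -> good (sg x).
Proof.
  induction b as [x|g ts IH] using term_nested_ind; intros Hc HG y Hy; simpl in *.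
  - now destruct Hy as [<-|[]].
  - inversion Hc as [|? ? Hg Hts]; subst.
    apply good_F_inv in HG as [ss [cs [He [_ [Hss [Hcs _]]]]]].
    unfold mf in Hcs; rewrite Hg in Hcs. destruct cs; [|discriminate].
    rewrite app_nil_r in He. subst ss.
    apply in_flat_map in Hy as [t [Ht Hy]].
    rewrite Forall_forall in IH, Hts. apply (IH t Ht (Hts t Ht)); auto.
    apply Hss. rewrite map_map. apply in_map_iff; eauto.
Qed.

Lemma good_ctor_list_vars sg ls : Forall (ctor_term R) ls ->
  (forall s, In s (map (subst sg) (map cemb ls)) -> good s) ->
  forall x, In x (flat_map vars ls) -> good (sg x).
Proof.
  intros Hc Hs x Hx. apply in_flat_map in Hx as [t [Ht Hx]].
  rewrite Forall_forall in Hc. apply (good_ctor_vars sg t); auto.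
  apply Hs. rewrite map_map. apply in_map_iff; eauto.
Qed.

Lemma length_Bs rho j : j <= length (cc rho) -> length (Bs rho j) = j.
Proof. intros. unfold Bs. rewrite length_map, length_firstn. lia. Qed.

Lemma Bs_S rho j a b : nth_error (cc rho) j = Some (a, b) -> Bs rho (S j) = Bs rho j ++ [cemb b].
Proof. intros H. unfold Bs. now rewrite (firstn_S_nth_error _ _ _ H), map_app. Qed.

Lemma Bs_eq rho j : Bs rho j = map cemb (map snd (firstn j (cc rho))).
Proof. unfold Bs. now rewrite map_map. Qed.

Lemma vars_Ls_rule_vars rho : incl (flat_map vars (Ls rho)) (rule_vars rho).
Proof.
  intros x Hx. unfold Ls in Hx. rewrite flat_map_vars_cemb in Hx.
  unfold rule_vars. apply in_app_iff; auto.
Qed.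

Lemma vars_cond_rule_vars rho a b : In (a, b) (cc rho) -> incl (vars b) (rule_vars rho).
Proof.
  intros H x Hx. unfold rule_vars. rewrite !in_app_iff. right; right.
  apply in_flat_map. exists (a, b). simpl. rewrite in_app_iff; auto.
Qed.

Lemma vars_Bs_rule_vars rho k : incl (flat_map vars (Bs rho k)) (rule_vars rho).
Proof.
  intros x Hx. rewrite Bs_eq, flat_map_vars_cemb, flat_map_map in Hx.
  apply in_flat_map in Hx as [[a b] [Hp Hx]]. apply in_firstn in Hp.
  exact (vars_cond_rule_vars rho a b Hp x Hx).
Qed.

Lemma map_subst_splice_Xs sg xs i us :
  map (subst sg) (splice (Xs xs) i us) = splice (map sg xs) i (map (subst sg) us).
Proof. unfold Xs. now rewrite map_splice, map_subst_map_V. Qed.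

Lemma rule_index_le_mf f i rho : nth_error (R f) (i - 1) = Some rho -> 1 <= i -> i <= mf R f.
Proof.
  intros H Hi. assert (i - 1 < length (R f)) by (apply nth_error_Some; congruence).
  unfold mf. lia.
Qed.

Lemma good_F_args f ss cs : length ss = ar f -> good (Fn (HF f) (ss ++ cs)) ->
  (forall s, In s ss -> good s) /\ Forall flag cs /\ length cs = mf R f.
Proof.
  intros Hl HG. apply good_F_inv in HG as [ss' [cs' [He [Hl' [Hs [Hc Hf]]]]]].
  apply app_inj_length in He as [-> ->]; [auto|lia].
Qed.

Lemma good_F_splice_bot f i ss cs :
  length ss = ar f -> (forall s, In s ss -> good s) -> 1 <= i -> i <= mf R f ->
  length cs = mf R f -> Forall flag (firstn (i - 1) cs) -> Forall flag (skipn i cs) ->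
  good (Fn (HF f) (ss ++ splice cs i [tBot])).
Proof.
  intros Hl Hss Hi Him Hcs Hf1 Hf2. apply good_F; auto.
  - rewrite length_splice1; lia.
  - apply Forall_splice. repeat split; auto. repeat constructor.
Qed.

Lemma good_Cond_splice f i j rho sg xs ws w :
  setup R f i rho xs -> 1 <= j -> j <= length (cc rho) ->
  Forall flag (firstn (i - 1) (map sg xs)) -> Forall flag (skipn i (map sg xs)) ->
  (forall s, In s (map (subst sg) (Ls rho)) -> good s) ->
  (forall b, In b (map (subst sg) (Bs rho (j - 1))) -> good b) -> good w ->
  ws = map (subst sg) (Bs rho (j - 1)) ++ [w] ->
  good (Fn (HCond f i j) (map (subst sg) (Ls rho) ++ splice (map sg xs) i ws)).
Proof.
  intros [Hi [Hr [Hlx _]]] Hj Hjk Hf1 Hf2 HL HB Hw ->.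
  pose proof (rule_index_le_mf _ _ _ Hr Hi).
  unfold splice. rewrite <- app_assoc. simpl.
  apply good_Cond; auto.
  - rewrite length_firstn, length_map. lia.
  - rewrite length_firstn, length_skipn, length_map. lia.
Qed.

Lemma good_Cond_splice_inv f i j rho sg xs ws :
  setup R f i rho xs -> length ws = j ->
  good (Fn (HCond f i j) (map (subst sg) (Ls rho) ++ splice (map sg xs) i ws)) ->
  Forall flag (firstn (i - 1) (map sg xs)) /\ Forall flag (skipn i (map sg xs)) /\
  (forall s, In s (map (subst sg) (Ls rho)) -> good s) /\ (forall b, In b ws -> good b).
Proof.
  intros [Hi [Hr [Hlx _]]] Hlw HG.
  pose proof (rule_index_le_mf _ _ _ Hr Hi).
  apply good_Cond_inv in HG
    as (rho' & sg' & cs1 & cs2 & w & _ & Hr' & Hj & Hjk & Hl1 & Hl2 & Hf1 & Hf2 & HL & HB & Hw & He).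
  rewrite Hr in Hr'. injection Hr' as <-.
  apply app_inj_length in He as [E1 He]; [|now rewrite !length_map].
  rewrite <- E1 in HL. unfold splice in He.
  apply app_inj_length in He as [E2 He]; [|rewrite length_firstn, length_map; lia].
  replace (map (subst sg') (Bs rho (j - 1)) ++ w :: cs2) with
    ((map (subst sg') (Bs rho (j - 1)) ++ [w]) ++ cs2) in He by now rewrite <- app_assoc.
  apply app_inj_length in He as [E3 E4];
    [|rewrite length_app, length_map, length_Bs by lia; simpl; lia].
  subst. repeat split; auto.
  intros b Hb. rewrite E3 in Hb. apply in_app_iff in Hb as [Hb|[<-|[]]]; auto.
Qed.

Notation xi_bot := (xi R tBot).

Definition match_or_AP (b u : term FS) (L : list nat) : Prop :=
  (exists sg, subst sg (cemb b) = xi_bot u) \/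
  (exists v, AP ar R b v /\ disjoint (vars v) L /\ exists sg, subst sg v = xi_bot u).

Lemma AP_linear b v : AP ar R b v -> NoDup (vars v).
Proof.
  induction 1; simpl.
  - now rewrite flat_map_vars_map_V.
  - now rewrite flat_map_app, flat_map_vars_map_V, flat_map_vars_repeat, app_nil_r.
  - rewrite flat_map_app, flat_map_vars_map_V. simpl. rewrite flat_map_vars_map_V.
    apply (Permutation_NoDup (l := xs1 ++ xs2 ++ vars u)); [|assumption].
    apply Permutation_app_head, Permutation_app_comm.
Qed.

Lemma match_or_AP_list ts us L :
  (forall t, In t ts -> forall u, wf ar u -> vars u = [] -> match_or_AP t u L) ->
  NoDup (flat_map vars ts) -> length ts = length us ->
  Forall (wf ar) us -> (forall u, In u us -> vars u = []) ->
  (exists sg, map (subst sg) (map cemb ts) = map xi_bot us) \/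
  (exists ts1 t ts2 us1 u0 us2 v, ts = ts1 ++ t :: ts2 /\ us = us1 ++ u0 :: us2 /\
     length ts1 = length us1 /\ AP ar R t v /\ disjoint (vars v) L /\
     exists sg, subst sg v = xi_bot u0).
Proof.
  revert us; induction ts as [|t ts IH]; intros [|u0 us] Hm Hn Hl Hwu Hg; simpl in Hl; try lia.
  - left. now exists (fun _ => V 0).
  - inversion Hwu as [|? ? Hwu0 Hwus]; subst. simpl in Hn.
    destruct (Hm t (or_introl eq_refl) u0 Hwu0 (Hg u0 (or_introl eq_refl)))
      as [[s0 E0]|[v [Hv [Hd [s0 E0]]]]].
    + destruct (IH us (fun t' Ht' => Hm t' (or_intror Ht')) (NoDup_app_remove_l _ _ Hn)
                  ltac:(lia) Hwus (fun u H => Hg u (or_intror H)))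
        as [[s1 E1]|(ts1 & t' & ts2 & us1 & u1 & us2 & v & -> & -> & Hl1 & Hv & Hd & s1 & E1)].
      * left. exists (subst_union (vars t) s0 s1). simpl. f_equal.
        -- rewrite <- E0. apply subst_ext_in. intros x Hx. rewrite vars_cemb in Hx.
           now apply subst_union_in.
        -- rewrite <- E1. apply map_subst_ext_in. intros x Hx.
           rewrite flat_map_vars_cemb in Hx. apply subst_union_notin. intros Hx'.
           exact (NoDup_app_disjoint _ _ x Hn Hx' Hx).
      * right. exists (t :: ts1), t', ts2, (u0 :: us1), u1, us2, v. simpl.
        repeat split; eauto.
    + right. exists [], t, ts, [], u0, us, v. repeat split; eauto.
Qed.

Lemma xi_bot_instance_of_fresh g xs us : NoDup xs -> length xs = length us ->
  exists sg, subst sg (Fn (HF g) (map V xs ++ repeat tBot (mf R g))) = xi_bot (Fn g us).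
Proof.
  intros Hnx Hl. exists (subst_update xs (map xi_bot us) (fun _ => V 0)). simpl. f_equal.
  rewrite map_app, map_repeat, subst_ground, map_subst_map_V by reflexivity.
  f_equal. apply map_subst_update; auto. now rewrite length_map.
Qed.

Lemma AP_arg_match f ts1 t ts2 us1 u0 us2 v L :
  is_constructor R f -> length ts1 = length us1 ->
  length (ts1 ++ t :: ts2) = length (us1 ++ u0 :: us2) ->
  AP ar R t v -> disjoint (vars v) L -> (exists sg, subst sg v = xi_bot u0) ->
  exists v', AP ar R (Fn f (ts1 ++ t :: ts2)) v' /\ disjoint (vars v') L /\
    exists sg, subst sg v' = xi_bot (Fn f (us1 ++ u0 :: us2)).
Proof.
  intros Hf Hl1 Hl Hv Hd [s0 E0]. rewrite !length_app in Hl. simpl in Hl.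
  destruct (fresh_vars (length ts1 + length ts2) (L ++ vars v)) as [xs [Hlx [Hnx Hdx]]].
  set (xs1 := firstn (length ts1) xs). set (xs2 := skipn (length ts1) xs).
  assert (Exs : xs = xs1 ++ xs2) by (symmetry; apply firstn_skipn).
  assert (L1 : length xs1 = length ts1) by (unfold xs1; rewrite length_firstn; lia).
  assert (L2 : length xs2 = length ts2) by (unfold xs2; rewrite length_skipn; lia).
  exists (Fn (HF f) (map V xs1 ++ v :: map V xs2)). split; [|split].
  - apply AP_arg; auto. rewrite app_assoc, <- Exs.
    apply NoDup_app; auto; [eapply AP_linear; eauto|].
    intros x Hx Hx'. apply (Hdx x Hx), in_app_iff; auto.
  - simpl. rewrite flat_map_app, flat_map_vars_map_V. simpl. rewrite flat_map_vars_map_V.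
    intros x Hx HL. rewrite !in_app_iff in Hx. destruct Hx as [Hx|[Hx|Hx]].
    + apply (Hdx x); [rewrite Exs; apply in_app_iff; auto|apply in_app_iff; auto].
    + exact (Hd x Hx HL).
    + apply (Hdx x); [rewrite Exs; apply in_app_iff; auto|apply in_app_iff; auto].
  - set (sg := subst_update xs (map xi_bot us1 ++ map xi_bot us2) s0).
    assert (Em : map sg xs1 ++ map sg xs2 = map xi_bot us1 ++ map xi_bot us2).
    { rewrite <- map_app, <- Exs. apply map_subst_update; auto. rewrite length_app, !length_map. lia. }
    apply app_inj_length in Em as [Em1 Em2]; [|rewrite !length_map; lia].
    exists sg. rewrite xi_ctor by auto. simpl. f_equal.
    rewrite map_app. simpl. rewrite !map_subst_map_V, map_app. simpl. rewrite Em1, Em2.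
    do 3 f_equal. rewrite <- E0. apply subst_ext_in. intros x Hx. apply subst_update_notin.
    intros Hx'. apply (Hdx x Hx'), in_app_iff; auto.
Qed.

Lemma match_or_AP_ctor_term b : ctor_term R b -> wf ar b -> NoDup (vars b) ->
  forall u L, wf ar u -> vars u = [] -> match_or_AP b u L.
Proof.
  induction b as [x|f ts IH] using term_nested_ind; intros Hct Hwb Hnd u L Hwu Hgu.
  - left. now exists (fun _ => xi_bot u).
  - destruct u as [y|g us]; [discriminate|].
    inversion Hct as [|? ? Hf Hcts]; subst. inversion Hwb as [|? ? Hlts Hwts]; subst.
    inversion Hwu as [|? ? Hlus Hwus]; subst. simpl in Hgu.
    destruct (classic (is_constructor R g)) as [Hgc|Hgd].
    + destruct (classic (g = f)) as [->|Hne].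
      * assert (Hm : forall t, In t ts -> forall u, wf ar u -> vars u = [] -> match_or_AP t u L).
        { intros t Ht u' Hwu' Hgu'. rewrite Forall_forall in IH, Hcts, Hwts.
          apply IH; auto. exact (NoDup_flat_map_In _ _ _ Hnd Ht). }
        destruct (match_or_AP_list ts us L Hm Hnd ltac:(lia) Hwus (proj1 (flat_map_eq_nil _ _) Hgu))
          as [[s0 E0]|(ts1 & t & ts2 & us1 & u0 & us2 & v & -> & -> & Hl1 & Hv & Hd & Hinst)].
        -- left. exists s0. rewrite xi_ctor by auto. simpl. now rewrite <- E0, map_map.
        -- right. apply (AP_arg_match f ts1 t ts2 us1 u0 us2 v L); auto; lia.
      * right. destruct (fresh_vars (ar g) L) as [xs [Hlx [Hnx Hdx]]].
        exists (Fn (HF g) (map V xs)). split; [|split].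
        -- apply AP_ctor; auto.
        -- simpl. now rewrite flat_map_vars_map_V.
        -- destruct (xi_bot_instance_of_fresh g xs us Hnx ltac:(lia)) as [sg Esg].
           exists sg. unfold mf in Esg. now rewrite Hgc, app_nil_r in Esg.
    + right. destruct (fresh_vars (ar g) L) as [xs [Hlx [Hnx Hdx]]].
      exists (Fn (HF g) (map V xs ++ repeat tBot (mf R g))). split; [|split].
      * apply AP_def; auto.
      * simpl. now rewrite flat_map_app, flat_map_vars_map_V, flat_map_vars_repeat, app_nil_r.
      * apply xi_bot_instance_of_fresh; auto. lia.
Qed.

Section StrongCCTRS.
Hypothesis HS : strong_CCTRS ar R.

Section Rule.
Variables (f : FS) (rho : crule FS).
Hypothesis Hrho : In rho (R f).

Let rule_facts := proj2 (HS f) rho Hrho.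

Lemma rule_lhs_length : length (cl rho) = ar f.
Proof. now destruct rule_facts as [(H & _) _]. Qed.

Lemma rule_lhs_wf : Forall (wf ar) (cl rho).
Proof. now destruct rule_facts as [(_ & H & _) _]. Qed.

Lemma rule_rhs_wf : wf ar (cr rho).
Proof. now destruct rule_facts as [(_ & _ & H & _) _]. Qed.

Lemma rule_cond_wf a b : In (a, b) (cc rho) -> wf ar a /\ wf ar b.
Proof.
  destruct rule_facts as [(_ & _ & _ & H & _) _].
  rewrite Forall_forall in H. exact (H (a, b)).
Qed.

Lemma rule_lhs_ctor : Forall (ctor_term R) (cl rho).
Proof. now destruct rule_facts as [(_ & _ & _ & _ & H & _) _]. Qed.

Lemma rule_cond_rhs_ctor a b : In (a, b) (cc rho) -> ctor_term R b.
Proof.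
  destruct rule_facts as [(_ & _ & _ & _ & _ & H & _) _].
  rewrite Forall_forall in H. exact (H (a, b)).
Qed.

Lemma rule_lhs_cond_disjoint j a b : nth_error (cc rho) j = Some (a, b) ->
  disjoint (flat_map vars (cl rho)) (vars b).
Proof. destruct rule_facts as [(_ & _ & _ & _ & _ & _ & H & _) _]. apply H. Qed.

Lemma rule_conds_disjoint j j' a b a' b' : j <> j' ->
  nth_error (cc rho) j = Some (a, b) -> nth_error (cc rho) j' = Some (a', b') ->
  disjoint (vars b) (vars b').
Proof. destruct rule_facts as [(_ & _ & _ & _ & _ & _ & _ & H & _) _]. apply H. Qed.

Lemma rule_rhs_vars :
  incl (vars (cr rho)) (flat_map vars (cl rho) ++ flat_map (fun p => vars (snd p)) (cc rho)).
Proof. now destruct rule_facts as [(_ & _ & _ & _ & _ & _ & _ & _ & H & _) _]. Qed.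

Lemma rule_cond_lhs_vars j a b : nth_error (cc rho) j = Some (a, b) ->
  incl (vars a)
       (flat_map vars (cl rho) ++ flat_map (fun p => vars (snd p)) (firstn j (cc rho))).
Proof. destruct rule_facts as [(_ & _ & _ & _ & _ & _ & _ & _ & _ & H) _]. apply H. Qed.

Lemma rule_lhs_linear : NoDup (flat_map vars (cl rho)).
Proof. now destruct rule_facts as [_ [H _]]. Qed.

Lemma rule_cond_rhs_linear a b : In (a, b) (cc rho) -> NoDup (vars b).
Proof.
  destruct rule_facts as [_ [_ H]].
  rewrite Forall_forall in H. exact (H (a, b)).
Qed.

Lemma length_Ls : length (Ls rho) = ar f.
Proof. unfold Ls. rewrite length_map. exact rule_lhs_length. Qed.

Lemma good_lhs_vars sg j :
  (forall s, In s (map (subst sg) (Ls rho)) -> good s) ->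
  (forall b, In b (map (subst sg) (Bs rho j)) -> good b) ->
  forall x, In x (flat_map vars (cl rho) ++ flat_map (fun p => vars (snd p)) (firstn j (cc rho))) ->
  good (sg x).
Proof.
  intros HL HB x Hx. apply in_app_iff in Hx as [Hx|Hx].
  - exact (good_ctor_list_vars sg _ rule_lhs_ctor HL x Hx).
  - rewrite <- flat_map_map in Hx. rewrite Bs_eq in HB.
    refine (good_ctor_list_vars sg _ _ HB x Hx).
    rewrite Forall_map, Forall_forall. intros [a b] Hab.
    eapply rule_cond_rhs_ctor, in_firstn; eauto.
Qed.

End Rule.

Lemma good_F_lhs_inv f i rho sg xs us : setup R f i rho xs ->
  good (Fn (HF f) (map (subst sg) (Ls rho) ++ splice (map sg xs) i us)) ->
  (forall s, In s (map (subst sg) (Ls rho)) -> good s) /\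
  Forall flag (firstn (i - 1) (map sg xs)) /\ Forall flag (skipn i (map sg xs)).
Proof.
  intros [_ [Hr _]] HG. apply good_F_args in HG as [HL [Hfl _]].
  - apply Forall_splice in Hfl as [Hf1 [_ Hf2]]. auto.
  - rewrite length_map. eapply length_Ls, nth_error_In; eauto.
Qed.

Lemma good_root_step l r sg : Xi ar R l r -> good (subst sg l) -> good (subst sg r).
Proof.
  intros HX.
  destruct HX as [f i rho xs Hset Hcc | f i rho xs a1 b1 Hset Hab
                 | f i rho xs Hset Hk | f i rho xs j a b Hset Hj Hjk Hab
                 | f i rho xs j a b v Hset Hj Hjk Hab _ _
                 | f i rho xs ys j lj v Hset Hly _ _ Hj Hjn _ _ _];
    pose proof Hset as (Hi & Hr & Hlx & _);
    pose proof (nth_error_In _ _ Hr) as Hrho; pose proof (rule_index_le_mf _ _ _ Hr Hi);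
    cbn [subst]; rewrite ?map_app, ?map_subst_splice_Xs; intros HG.
  - apply (good_F_lhs_inv f i rho sg xs _ Hset) in HG as [HL _].
    apply good_subst_xi_top; [exact (rule_rhs_wf f rho Hrho)|].
    intros x Hx. apply (good_lhs_vars f rho Hrho sg (length (cc rho)) HL).
    + unfold Bs. rewrite Hcc. simpl. tauto.
    + rewrite firstn_all. exact (rule_rhs_vars f rho Hrho x Hx).
  - apply (good_F_lhs_inv f i rho sg xs _ Hset) in HG as [HL [Hf1 Hf2]].
    assert (0 < length (cc rho)) by (apply nth_error_Some; congruence).
    apply (good_Cond_splice f i 1 rho sg xs _ (subst sg (xi R tTop a1))); auto; try lia.
    + simpl. tauto.
    + apply good_subst_xi_top; [exact (proj1 (rule_cond_wf f rho Hrho a1 b1 (nth_error_In _ _ Hab)))|].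
      intros x Hx. apply (good_lhs_vars f rho Hrho sg 0 HL); [simpl; tauto|].
      exact (rule_cond_lhs_vars f rho Hrho 0 a1 b1 Hab x Hx).
  - apply good_Cond_splice_inv in HG as (_ & _ & HL & HB); auto;
      [|rewrite length_map, length_Bs; lia].
    apply good_subst_xi_top; [exact (rule_rhs_wf f rho Hrho)|].
    intros x Hx. apply (good_lhs_vars f rho Hrho sg (length (cc rho)) HL HB).
    rewrite firstn_all. exact (rule_rhs_vars f rho Hrho x Hx).
  - apply good_Cond_splice_inv in HG as (Hf1 & Hf2 & HL & HB); auto;
      [|rewrite length_map, length_Bs; lia].
    apply (good_Cond_splice f i (S j) rho sg xs _ (subst sg (xi R tTop a))); auto; try lia.
    + simpl. now rewrite Nat.sub_0_r.
    + apply good_subst_xi_top; [exact (proj1 (rule_cond_wf f rho Hrho a b (nth_error_In _ _ Hab)))|].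
      intros x Hx. apply (good_lhs_vars f rho Hrho sg j HL HB).
      exact (rule_cond_lhs_vars f rho Hrho j a b Hab x Hx).
    + simpl. now rewrite Nat.sub_0_r, map_app.
  - apply good_Cond_splice_inv in HG as (Hf1 & Hf2 & HL & _); auto;
      [|rewrite length_map, length_app, length_Bs; simpl; lia].
    apply good_F_splice_bot; auto; rewrite length_map; auto.
    now apply length_Ls.
  - apply good_F_args in HG as [Hss [Hfl _]]; [|cbn [map]; rewrite length_splice1; rewrite ?length_map; lia].
    apply Forall_splice in Hfl as [Hf1 [_ Hf2]].
    apply good_F_splice_bot; auto; cbn [map]; rewrite ?length_splice1; rewrite ?length_map; lia.
Qed.

Lemma good_ctx g ts1 t t' ts2 : active ar g (length ts1) ->
  good (Fn g (ts1 ++ t :: ts2)) -> good t /\ (good t' -> good (Fn g (ts1 ++ t' :: ts2))).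
Proof.
  intros Ha HG. destruct g as [f|f i j| |]; simpl in Ha; try contradiction.
  - apply good_F_inv in HG as [ss [cs [He [Hl [Hs [Hc Hf]]]]]].
    apply app_cons_inj_length in He as [c2 [-> ->]]; [|lia].
    split; [apply Hs, in_app_iff; simpl; auto|].
    intros Ht'. rewrite app_comm_cons, app_assoc. apply good_F; auto.
    + rewrite !length_app in *; simpl in *; lia.
    + intros s Hs'. apply in_app_iff in Hs' as [H|[<-|H]]; auto; apply Hs, in_app_iff; simpl; auto.
  - apply good_Cond_inv in HG
      as (rho & sg & cs1 & cs2 & w & Hi & Hr & Hj & Hjk & Hl1 & Hl2 & Hf1 & Hf2 & HL & HB & Hw & He).
    rewrite app_assoc, app_assoc in He.
    apply app_inj_length in He as [E1 E2].
    2:{ rewrite !length_app, !length_map, length_Bs by lia.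
        rewrite (length_Ls f rho) by (eapply nth_error_In; eauto). lia. }
    injection E2 as -> ->. split; auto. intros Ht'.
    rewrite E1, <- !app_assoc. apply good_Cond; auto.
Qed.

Lemma good_step t t' : cstep ar R t t' -> good t -> good t'.
Proof.
  induction 1; intros HG.
  - eapply good_root_step; eauto.
  - apply good_ctx with (t' := t') in HG as [H1 H2]; auto.
Qed.

Lemma good_steps t t' : csteps ar R t t' -> good t -> good t'.
Proof. induction 1; auto. intros; apply IHcsteps; eapply good_step; eauto. Qed.

Definition reducible (t : T) : Prop := exists t', cstep ar R t t'.

Lemma reducible_ctx g ts1 t ts2 : active ar g (length ts1) -> reducible t ->
  reducible (Fn g (ts1 ++ t :: ts2)).
Proof. intros Ha [t' Ht]. exists (Fn g (ts1 ++ t' :: ts2)). now apply cstep_ctx. Qed.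

Lemma reducible_top_flag_match f rho xs sg us cs1 cs2 :
  setup R f (length cs1 + 1) rho xs -> length (cs1 ++ tTop :: cs2) = mf R f ->
  map (subst sg) (Ls rho) = map xi_bot us ->
  reducible (Fn (HF f) (map xi_bot us ++ cs1 ++ tTop :: cs2)).
Proof.
  intros Hset Hlc E0. pose proof Hset as (_ & _ & Hlx & Hnx & Hdx).
  set (sg' := subst_update xs (cs1 ++ tTop :: cs2) sg).
  assert (Eterm : Fn (HF f) (map xi_bot us ++ cs1 ++ tTop :: cs2) =
                  subst sg' (Fn (HF f) (Ls rho ++ splice (Xs xs) (length cs1 + 1) [tTop]))).
  { simpl. rewrite map_app, map_subst_splice_Xs. unfold sg'. rewrite map_subst_update by (auto; lia).
    rewrite splice_middle, <- E0. do 2 f_equal. apply map_subst_ext_in. intros x Hx.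
    symmetry. apply subst_update_notin. intros Hx'. exact (Hdx x Hx' (vars_Ls_rule_vars rho x Hx)). }
  rewrite Eterm. destruct (cc rho) as [|[a1 b1] ccr] eqn:Ecc; eexists; apply cstep_root.
  - now apply Xi1.
  - eapply Xi2; eauto. now rewrite Ecc.
Qed.

Lemma reducible_top_flag_AP f rho xs ys us1 u0 us2 cs1 cs2 ts1 lj ts2 v s0 :
  setup R f (length cs1 + 1) rho xs -> length (cs1 ++ tTop :: cs2) = mf R f ->
  length ys = ar f -> NoDup ys -> disjoint ys (xs ++ rule_vars rho) ->
  cl rho = ts1 ++ lj :: ts2 -> length ts1 = length us1 -> length (us1 ++ u0 :: us2) = ar f ->
  AP ar R lj v -> disjoint (vars v) (xs ++ ys ++ rule_vars rho) -> subst s0 v = xi_bot u0 ->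
  reducible (Fn (HF f) (map xi_bot (us1 ++ u0 :: us2) ++ cs1 ++ tTop :: cs2)).
Proof.
  intros Hset Hlc Hly Hny Hdy Ecl Hl1 Hlu Hv Hd E0.
  pose proof Hset as (_ & Hr & Hlx & Hnx & Hdx).
  pose proof (rule_lhs_length f rho (nth_error_In _ _ Hr)) as Hlcl.
  set (j := length ts1 + 1).
  set (sg := subst_update ys (map xi_bot (us1 ++ u0 :: us2)) (subst_update xs (cs1 ++ tTop :: cs2) s0)).
  assert (Eys : map sg ys = map xi_bot (us1 ++ u0 :: us2)).
  { apply map_subst_update; auto. rewrite length_map. lia. }
  assert (Exs : map sg xs = cs1 ++ tTop :: cs2).
  { transitivity (map (subst_update xs (cs1 ++ tTop :: cs2) s0) xs); [|apply map_subst_update; auto; lia].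
    apply map_ext_in. intros x Hx. apply subst_update_notin. intros Hy. apply (Hdy x Hy), in_app_iff; auto. }
  assert (Ev : subst sg v = xi_bot u0).
  { rewrite <- E0. apply subst_ext_in. intros x Hx. unfold sg. rewrite !subst_update_notin; auto.
    - intros Hx'. apply (Hd x Hx), in_app_iff; auto.
    - intros Hx'. apply (Hd x Hx). rewrite !in_app_iff; auto. }
  replace (Fn (HF f) (map xi_bot (us1 ++ u0 :: us2) ++ cs1 ++ tTop :: cs2)) with
    (subst sg (Fn (HF f) (splice (Xs ys) j [v] ++ splice (Xs xs) (length cs1 + 1) [tTop]))).
  2:{ simpl. rewrite map_app, !map_subst_splice_Xs, Eys, Exs. cbn [map]. rewrite Ev.
      rewrite !map_app. simpl. unfold j. rewrite Hl1, <- (length_map xi_bot us1), !splice_middle.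
      reflexivity. }
  eexists. apply cstep_root, (@Xi6 FS ar R f (length cs1 + 1) rho xs ys j lj v); auto.
  - apply NoDup_app; auto. intros x Hx Hy. apply (Hdy x Hy), in_app_iff; auto.
  - intros x Hx Hx'. apply (Hdy x Hx), in_app_iff; auto.
  - unfold j; lia.
  - rewrite Ecl, length_app in Hlcl. simpl in Hlcl. unfold j. lia.
  - rewrite Ecl. unfold j. replace (length ts1 + 1 - 1) with (length ts1) by lia.
    now rewrite nth_error_app2, Nat.sub_diag by lia.
Qed.

Lemma Bs_cond_disjoint f rho j a b : In rho (R f) -> nth_error (cc rho) j = Some (a, b) ->
  disjoint (flat_map vars (Bs rho j)) (vars b).
Proof.
  intros Hrho Hj x Hx Hb.
  rewrite Bs_eq, flat_map_vars_cemb, flat_map_map in Hx.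
  apply in_flat_map in Hx as [[a' b'] [Hp Hx]]. apply In_nth_error in Hp as [n Hn].
  rewrite nth_error_firstn in Hn. destruct (Nat.ltb_spec n j); [|discriminate].
  exact (rule_conds_disjoint f rho Hrho n j a' b' a b ltac:(lia) Hn Hj x Hx Hb).
Qed.

(* The flag [tBot] given to the [i]-th variable of [xs] is arbitrary: that
   position is spliced out. *)
Lemma subst_Cond_lhs f i j rho xs sg s0 l cs1 cs2 bs w0 :
  setup R f i rho xs -> length cs1 = i - 1 -> length cs1 + S (length cs2) = mf R f ->
  incl (flat_map vars bs) (rule_vars rho) ->
  disjoint l (flat_map vars (Ls rho) ++ flat_map vars bs) ->
  incl (vars w0) l -> disjoint (vars w0) xs ->
  subst (subst_update xs (cs1 ++ tBot :: cs2) (subst_union l s0 sg))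
        (Fn (HCond f i j) (Ls rho ++ splice (Xs xs) i (bs ++ [w0])))
  = Fn (HCond f i j) (map (subst sg) (Ls rho) ++ cs1 ++ map (subst sg) bs ++ subst s0 w0 :: cs2).
Proof.
  intros (Hi & _ & Hlx & Hnx & Hdx) Hl1 Hl2 Hbs Hl Hw0 Hdw.
  set (sg' := subst_update xs (cs1 ++ tBot :: cs2) (subst_union l s0 sg)).
  assert (Esg' : forall x, In x (rule_vars rho) -> ~ In x l -> sg' x = sg x).
  { intros x Hx Hxl. unfold sg'. rewrite subst_update_notin by (intros Hx'; exact (Hdx x Hx' Hx)).
    now apply subst_union_notin. }
  assert (EL : map (subst sg') (Ls rho) = map (subst sg) (Ls rho)).
  { apply map_subst_ext_in. intros x Hx. apply Esg'; [now apply vars_Ls_rule_vars|].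
    intros Hxl. apply (Hl x Hxl), in_app_iff; auto. }
  assert (EB : map (subst sg') bs = map (subst sg) bs).
  { apply map_subst_ext_in. intros x Hx. apply Esg'; [now apply Hbs|].
    intros Hxl. apply (Hl x Hxl), in_app_iff; auto. }
  assert (Ew : subst sg' w0 = subst s0 w0).
  { apply subst_ext_in. intros x Hx. unfold sg'.
    rewrite subst_update_notin by exact (Hdw x Hx). apply subst_union_in. now apply Hw0. }
  cbn [subst]. rewrite map_app, map_subst_splice_Xs, EL.
  unfold sg' at 1. rewrite map_subst_update; [|exact Hnx|rewrite length_app; simpl; lia].
  replace i with (length cs1 + 1) by lia.
  rewrite splice_middle, map_app, EB. cbn [map]. now rewrite Ew, <- !app_assoc.
Qed.

Lemma reducible_Cond f i j rho sg cs1 cs2 u :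
  1 <= i -> nth_error (R f) (i - 1) = Some rho -> 1 <= j -> j <= length (cc rho) ->
  length cs1 = i - 1 -> length cs1 + S (length cs2) = mf R f -> wf ar u -> vars u = [] ->
  reducible (Fn (HCond f i j)
    (map (subst sg) (Ls rho) ++ cs1 ++ map (subst sg) (Bs rho (j - 1)) ++ xi_bot u :: cs2)).
Proof.
  intros Hi Hr Hj Hjk Hl1 Hl2 Hwu Hgu.
  pose proof (nth_error_In _ _ Hr) as Hrho.
  destruct (nth_error (cc rho) (j - 1)) as [[a b]|] eqn:Hab;
    [|apply nth_error_None in Hab; lia].
  pose proof (nth_error_In _ _ Hab) as Hab_in.
  destruct (fresh_vars (mf R f) (rule_vars rho)) as [xs [Hlx [Hnx Hdx]]].
  assert (Hset : setup R f i rho xs) by (repeat split; auto).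
  assert (HBs : incl (flat_map vars (Bs rho (j - 1))) (rule_vars rho))
    by apply vars_Bs_rule_vars.
  destruct (match_or_AP_ctor_term b (rule_cond_rhs_ctor f rho Hrho a b Hab_in)
              (proj2 (rule_cond_wf f rho Hrho a b Hab_in))
              (rule_cond_rhs_linear f rho Hrho a b Hab_in) u (xs ++ rule_vars rho) Hwu Hgu)
    as [[s0 E0]|[v [Hv [Hd [s0 E0]]]]].
  - rewrite <- E0, <- (subst_Cond_lhs f i j rho xs sg s0 (vars b) cs1 cs2 _ (cemb b)); auto.
    + replace (Bs rho (j - 1) ++ [cemb b]) with (Bs rho j)
        by (rewrite <- (Bs_S _ _ _ _ Hab); f_equal; lia).
      destruct (Nat.eq_dec j (length (cc rho))) as [->|Hjk'].
      * eexists. apply cstep_root, Xi3; auto; lia.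
      * destruct (nth_error (cc rho) j) as [[a' b']|] eqn:Hab';
          [|apply nth_error_None in Hab'; lia].
        eexists. apply cstep_root. exact (Xi4 ar Hset Hj ltac:(lia) Hab').
    + intros x Hb Hx. apply in_app_iff in Hx as [Hx|Hx].
      * unfold Ls in Hx. rewrite flat_map_vars_cemb in Hx.
        exact (rule_lhs_cond_disjoint f rho Hrho _ a b Hab x Hx Hb).
      * exact (Bs_cond_disjoint f rho _ a b Hrho Hab x Hx Hb).
    + rewrite vars_cemb. apply incl_refl.
    + intros x Hx Hxs. rewrite vars_cemb in Hx.
      exact (Hdx x Hxs (vars_cond_rule_vars rho a b Hab_in x Hx)).
  - rewrite <- E0, <- (subst_Cond_lhs f i j rho xs sg s0 (vars v) cs1 cs2 _ v); auto.
    + eexists. apply cstep_root. eapply Xi5; eauto.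
    + intros x Hx Hx'. apply (Hd x Hx), in_app_iff. right.
      apply in_app_iff in Hx' as [Hx'|Hx']; [now apply vars_Ls_rule_vars|now apply HBs].
    + apply incl_refl.
    + intros x Hx Hxs. apply (Hd x Hx), in_app_iff; auto.
Qed.

Lemma reducible_top_flag f us cs1 cs2 :
  length us = ar f -> Forall (wf ar) us -> (forall u, In u us -> vars u = []) ->
  length (cs1 ++ tTop :: cs2) = mf R f ->
  reducible (Fn (HF f) (map xi_bot us ++ cs1 ++ tTop :: cs2)).
Proof.
  intros Hlu Hwu Hgu Hlc.
  destruct (nth_error (R f) (length cs1)) as [rho|] eqn:Hr;
    [|apply nth_error_None in Hr; rewrite length_app in Hlc; unfold mf in Hlc; simpl in Hlc; lia].
  pose proof (nth_error_In _ _ Hr) as Hrho.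
  destruct (fresh_vars (mf R f) (rule_vars rho)) as [xs [Hlx [Hnx Hdx]]].
  assert (Hset : setup R f (length cs1 + 1) rho xs)
    by (repeat split; auto; [lia|now replace (length cs1 + 1 - 1) with (length cs1) by lia]).
  destruct (fresh_vars (ar f) (xs ++ rule_vars rho)) as [ys [Hly [Hny Hdy]]].
  assert (Hm : forall l, In l (cl rho) -> forall u, wf ar u -> vars u = [] ->
                 match_or_AP l u (xs ++ ys ++ rule_vars rho)).
  { intros l Hl u Hwu0 Hgu0. pose proof (rule_lhs_ctor f rho Hrho) as Hct.
    pose proof (rule_lhs_wf f rho Hrho) as Hwl. rewrite Forall_forall in Hct, Hwl.
    apply match_or_AP_ctor_term; auto.
    exact (NoDup_flat_map_In _ _ _ (rule_lhs_linear f rho Hrho) Hl). }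
  pose proof (rule_lhs_length f rho Hrho) as Hlcl.
  destruct (match_or_AP_list _ us _ Hm (rule_lhs_linear f rho Hrho) ltac:(lia) Hwu Hgu)
    as [[s0 E0]|(ts1 & lj & ts2 & us1 & u0 & us2 & v & Ecl & -> & Hl1 & Hv & Hd & s0 & E0)].
  - exact (reducible_top_flag_match f rho xs s0 us cs1 cs2 Hset Hlc E0).
  - exact (reducible_top_flag_AP f rho xs ys us1 u0 us2 cs1 cs2 ts1 lj ts2 v s0
             Hset Hlc Hly Hny Hdy Ecl Hl1 Hlu Hv Hd E0).
Qed.

Lemma good_normal_form t : good t -> ~ reducible t ->
  exists u, wf ar u /\ vars u = [] /\ t = xi_bot u.
Proof.
  induction 1 as [f ss cs Hl Hss IH Hc Hf
                 |f i j rho sg cs1 cs2 w Hi Hr Hj Hjk Hl1 Hl2 _ _ _ _ _ _ _ IHw]; intros Hnf.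
  - assert (Hss_nf : forall s, In s ss -> exists u, (wf ar u /\ vars u = []) /\ s = xi_bot u).
    { intros s Hs. destruct (IH s Hs) as [u [H1 [H2 H3]]]; eauto.
      intros Hred. apply Hnf. apply in_split in Hs as [a [b ->]].
      rewrite <- app_assoc. apply reducible_ctx; auto.
      simpl. rewrite length_app in Hl; simpl in Hl; lia. }
    apply list_exists_preimage in Hss_nf as [us [-> Hus]].
    rewrite length_map in Hl.
    destruct (flags_all_bot_or_top cs Hf) as [Ecs|(cs1 & cs2 & ->)].
    + exists (Fn f us). split; [|split].
      * constructor; auto. apply Forall_forall. intros; apply Hus; auto.
      * simpl. apply flat_map_eq_nil. intros u Hu. apply Hus, Hu.
      * simpl. now rewrite Ecs, Hc.
    + exfalso. apply Hnf, reducible_top_flag; auto.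
      * apply Forall_forall. intros; apply Hus; auto.
      * intros; apply Hus; auto.
  - destruct IHw as (u & Hwu & Hgu & ->).
    { intros Hred. apply Hnf.
      rewrite app_assoc, app_assoc. apply reducible_ctx; auto. simpl.
      rewrite !length_app, !length_map, length_Bs by lia.
      rewrite (length_Ls f rho) by (eapply nth_error_In; eauto). lia. }
    exfalso. apply Hnf. now apply reducible_Cond.
Qed.

End StrongCCTRS.
End Transformation.

Theorem lemmaA (FS : Type) (ar : FS -> nat) (R : FS -> list (crule FS))
  (s t : term (hsym FS)) :
  strong_CCTRS ar R ->
  proper ar R s -> ground s ->
  normal_form_of ar R s t ->
  bot_pattern ar R t.
Proof.
  intros HS Hp Hg [Hst Hnf].
  assert (Ht : good ar R t) by exact (good_steps ar R HS s t Hst (proper_ground_good ar R s Hp Hg)).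
  destruct (good_normal_form ar R HS t Ht Hnf) as (u & Hwu & Hgu & ->).
  split; [|now exists u].
  unfold linear. rewrite vars_xi, Hgu by reflexivity. constructor.
Qed.
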